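(* Let $S$ be a reflective numerical semigroup with $\mathrm{g}(S)=g\ge1$ and $\mathrm{m}(S)=a$. Let $q=\lfloor g/a\rfloor$ and $r=g-qa$. Then \[ \mathrm{PF}(S)=\{g-(r-1),\,g-(r-2),\dots,g-1\}\cup\{2g-r\}, \] and in particular the type of $S$ equals $r$.
   Context: A numerical semigroup is a submonoid $S$ of $(\mathbb{N}_0,+)$ with finite complement. Its set of gaps is $\mathrm{H}(S)=\mathbb{N}_0\setminus S$, its genus is $\mathrm{g}(S)=\#\mathrm{H}(S)$, and its multiplicity $\mathrm{m}(S)$ is the smallest positive element of $S$. The set of pseudo-Frobenius numbers is $\mathrm{PF}(S)=\{h\in\mathrm{H}(S): h+s\in S\text{ for all } 0\ne s\in S\}$, and the type of $S$ is $\#\mathrm{PF}(S)$. A numerical semigroup $S$ of genus $g\ge1$ is called reflective if for every $z\in\{0,1,\dots,g-1\}$ exactly one of $z$ and $z+g$ belongs to $S$. (When $S$ is reflective, $a\nmid g$, so $1\le r\le a-1$.) *)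

From mathcomp Require Import all_boot.
Set Implicit Arguments. Unset Strict Implicit. Unset Printing Implicit Defensive.

Definition numerical_semigroup (S : pred nat) : Prop :=
  [/\ S 0,
      (forall x y, S x -> S y -> S (x + y)) &
      exists N, forall n, N <= n -> S n].

Definition genus (S : pred nat) (g : nat) : Prop :=
  exists gaps : seq nat, [/\ uniq gaps, (forall n, (n \in gaps) = ~~ S n) &
                             size gaps = g].

Definition multiplicity (S : pred nat) (a : nat) : Prop :=
  [/\ 0 < a, S a & forall n, 0 < n < a -> ~~ S n].

Definition PF (S : pred nat) (h : nat) : Prop :=
  ~~ S h /\ (forall s, S s -> s != 0 -> S (h + s)).

Definition semigroup_type (S : pred nat) (t : nat) : Prop :=
  exists l : seq nat, [/\ uniq l, (forall h, h \in l <-> PF S h) & size l = t].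

Definition reflective (S : pred nat) (g : nat) : Prop :=
  1 <= g /\ genus S g /\ (forall z, z < g -> S z (+) S (z + g)).

From mathcomp Require Import all_boot.
From mathcomp Require Import zify.

Set Implicit Arguments.
Unset Strict Implicit.
Unset Printing Implicit Defensive.

(* If x < g lies in S, so does x - a: otherwise reflectivity puts x - a + g,
   hence x + g, in S together with x. Descending by a, S agrees below g with
   the multiples of a, and by reflectivity the gaps in [g, 2g) are the g + k a.
   Each pair {z, z + g} with z < g contains exactly one gap, so all g gaps lie
   below 2g. Writing g = q a + r with 0 < r < a, the pseudo-Frobenius numbers
   are then read off: the gaps of (q a, g) and the Frobenius number g + q a. *)

Lemma ndvdn_between m d x : m * d < x < m.+1 * d -> ~~ (d %| x).
Proof.
case/andP=> lo hi; apply/dvdnP=> [[k def_x]].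
by rewrite def_x !ltn_mul2r in lo hi; lia.
Qed.

Lemma count_iota_double (P : pred nat) g :
  (forall z, z < g -> P z (+) P (g + z)) -> count P (iota 0 (g + g)) = g.
Proof.
move=> Pxor; rewrite iotaD count_cat add0n -{2}[g]addn0 iotaDl count_map.
rewrite -count_predUI (@eq_in_count _ (predU _ _) predT); last first.
  by move=> z; rewrite mem_iota /= => /Pxor; case: (P z); case: (P (g + z)).
rewrite (@eq_in_count _ (predI _ _) pred0); last first.
  by move=> z; rewrite mem_iota /= => /Pxor; case: (P z); case: (P (g + z)).
by rewrite count_predT count_pred0 size_iota addn0.
Qed.

Lemma semigroup_type_interval S n c k : 0 < k <= n -> n <= c ->
  (forall h, PF S h <-> (n - k < h < n \/ h = c)) -> semigroup_type S k.
Proof.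
move=> /andP[k_gt0 le_kn] le_nc PFE.
exists (iota (n - k).+1 k.-1 ++ [:: c]); split.
- by rewrite cat_uniq iota_uniq /= mem_iota andbT orbF; lia.
- move=> h; rewrite PFE mem_cat mem_iota mem_seq1.
  split=> [/orP[in_h|/eqP ->]|[in_h|->]]; [left; lia|by right| |by rewrite eqxx orbT].
  by apply/orP; left; lia.
- by rewrite size_cat size_iota /=; lia.
Qed.

Section Reflective.

Variables (S : pred nat) (g a : nat).
Hypotheses (semS : numerical_semigroup S) (reflS : reflective S g)
  (multS : multiplicity S a).

Lemma reflective_mem_ge n : 2 * g <= n -> S n.
Proof.
have [_ [[gaps [_ mem_gaps size_gaps]] Sxor]] := reflS.
move=> le_2g_n; apply/negPn/negP=> Sn'.
set l := n :: [seq z <- iota 0 (g + g) | ~~ S z].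
have uniq_l : uniq l.
  by rewrite /l /= filter_uniq ?iota_uniq // andbT mem_filter mem_iota; lia.
have sub_l : {subset l <= gaps}.
  by move=> x; rewrite in_cons mem_filter mem_gaps => /orP[/eqP -> //|/andP[]].
have := uniq_leq_size uniq_l sub_l.
rewrite /l /= size_filter count_iota_double ?size_gaps; first lia.
by move=> z /Sxor; rewrite [g + z]addnC; case: (S z); case: (S (z + g)).
Qed.

Lemma mem_mul_mult k : S (k * a).
Proof.
have [S0 Sadd _] := semS; have [_ Sa _] := multS.
by elim: k => [|k IHk]; rewrite ?mul0n // mulSn Sadd.
Qed.

Lemma mult_le_mem s : S s -> s != 0 -> a <= s.
Proof.
have [_ _ no_small] := multS; move=> Ss s_neq0; rewrite leqNgt.
by apply: contraTN Ss => lt_sa; apply: no_small; rewrite lt_sa lt0n s_neq0.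
Qed.

Lemma reflective_mem_lt x : x < g -> S x = (a %| x).
Proof.
have [_ Sadd _] := semS; have [a_gt0 Sa _] := multS; have [_ [_ Sxor]] := reflS.
move=> lt_xg; apply/idP/idP=> [|/dvdnP[k ->]]; last exact: mem_mul_mult.
elim/ltn_ind: x lt_xg => x IHx lt_xg Sx.
have [lt_xa|le_ax] := ltnP x a.
  have [-> //|x_gt0] := posnP x.
  by have := mult_le_mem Sx; rewrite -lt0n x_gt0 leqNgt lt_xa => /(_ isT).
have S_xa : S (x - a).
  apply/negPn/negP=> S_xa'.
  have := Sxor (x - a) ltac:(lia); rewrite (negbTE S_xa') /= => S_xag.
  have := Sadd _ _ S_xag Sa; rewrite (_ : x - a + g + a = x + g); last lia.
  by have := Sxor x lt_xg; rewrite Sx /= => /negbTE ->.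
have dvd_xa : a %| x - a by apply: IHx S_xa; lia.
by rewrite -(subnK le_ax) dvdn_add.
Qed.

Lemma reflective_mem_mid n : g <= n < 2 * g -> S n = ~~ (a %| n - g).
Proof.
have [_ [_ Sxor]] := reflS; move=> /andP[le_gn lt_n2g].
have := Sxor (n - g) ltac:(lia); rewrite subnK // reflective_mem_lt; last lia.
by case: (a %| n - g); case: (S n).
Qed.

Lemma reflective_mod_gt0 : 0 < g %% a.
Proof.
have [S0 _ _] := semS; have [g_gt0 [_ Sxor]] := reflS.
rewrite lt0n; apply/negP=> /eqP g_mod0.
by have := Sxor 0 g_gt0; rewrite S0 add0n (divn_eq g a) g_mod0 addn0 mem_mul_mult.
Qed.

Lemma PF_reflective_range h :
  PF S h -> g - g %% a < h < g \/ h = 2 * g - g %% a.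
Proof.
have [a_gt0 Sa _] := multS; have r_gt0 := reflective_mod_gt0.
have r_lt_a := ltn_pmod g a_gt0; have g_eq := divn_eq g a.
set q := g %/ a in g_eq *; set r := g %% a in r_gt0 r_lt_a g_eq *.
case=> Sh' PFh; have [lt_hg|le_gh] := ltnP h g.
- left; rewrite andbT ltnNge g_eq addnK; apply/negP=> le_h_qa.
  rewrite reflective_mem_lt // in Sh'.
  (* adding g + q a - h, an element of S, lands on the gap g + q a *)
  have S_sh : S (g + (q * a - h)).
    rewrite reflective_mem_mid; last lia.
    rewrite addKn; apply: contra Sh' => dvd_qah.
    by rewrite -(subKn le_h_qa); apply: dvdn_sub; rewrite ?dvdn_mull.
  have := PFh _ S_sh ltac:(lia); rewrite reflective_mem_mid; last lia.
  by rewrite (_ : _ - g = q * a) ?dvdn_mull //; lia.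
- right; have lt_h2g : h < 2 * g.
    by rewrite ltnNge; apply: contra Sh'; apply: reflective_mem_ge.
  rewrite reflective_mem_mid ?le_gh // negbK in Sh'.
  case/dvdnP: Sh' => k hg_eq.
  have le_kq : k <= q by rewrite -ltnS -(ltn_pmul2r a_gt0) mulSn; lia.
  have [lt_kq|le_qk] := ltnP k q; last first.
    have k_eq : k = q by apply/eqP; rewrite eqn_leq le_kq.
    by rewrite k_eq in hg_eq; lia.
  have le_k1q : a + k * a <= q * a by rewrite -mulSn leq_mul2r lt_kq orbT.
  have := PFh _ Sa ltac:(lia); rewrite reflective_mem_mid; last lia.
  by rewrite (_ : h + a - g = k.+1 * a) ?dvdn_mull // mulSn; lia.
Qed.

Lemma reflective_range_PF h :
  g - g %% a < h < g \/ h = 2 * g - g %% a -> PF S h.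
Proof.
have [a_gt0 _ _] := multS; have r_gt0 := reflective_mod_gt0.
have r_lt_a := ltn_pmod g a_gt0; have g_eq := divn_eq g a.
set q := g %/ a in g_eq *; set r := g %% a in r_gt0 r_lt_a g_eq *.
case=> [/andP[lt_h lt_hg]|->]; split.
- rewrite reflective_mem_lt //; apply: (@ndvdn_between q); rewrite mulSn; lia.
- move=> s Ss s_neq0; have le_as := mult_le_mem Ss s_neq0.
  have [lt_hs2g|] := ltnP (h + s) (2 * g); last exact: reflective_mem_ge.
  rewrite reflective_mem_mid; last lia.
  have [lt_sg|le_gs] := ltnP s g.
    rewrite reflective_mem_lt // in Ss; case/dvdnP: Ss => [[|k] s_eq].
      by rewrite s_eq in s_neq0.
    by apply: (@ndvdn_between k); rewrite s_eq !mulSn; lia.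
  by apply: (@ndvdn_between q); rewrite mulSn; lia.
- rewrite reflective_mem_mid ?negbK; last lia.
  by rewrite (_ : 2 * g - r - g = q * a) ?dvdn_mull //; lia.
- move=> s Ss s_neq0; have le_as := mult_le_mem Ss s_neq0.
  by apply: reflective_mem_ge; lia.
Qed.

End Reflective.

Theorem mainTheorem7 (S : pred nat) (g a : nat) :
  numerical_semigroup S ->
  genus S g -> 1 <= g ->
  reflective S g ->
  multiplicity S a ->
  let q := g %/ a in
  let r := g - q * a in
  (forall h, PF S h <-> ((g - r < h < g) \/ h = 2 * g - r)) /\
  semigroup_type S r.
Proof.
move=> semS _ _ reflS multS q r.
have r_mod : r = g %% a by rewrite /r /q {1}(divn_eq g a) addKn.
have PFE h : PF S h <-> (g - r < h < g \/ h = 2 * g - r).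
  by rewrite r_mod; split; [apply: PF_reflective_range|apply: reflective_range_PF].
have r_gt0 : 0 < r by rewrite r_mod (reflective_mod_gt0 semS reflS multS).
have le_rg : r <= g by rewrite r_mod leq_mod.
by split=> //; apply: semigroup_type_interval PFE; lia.
Qed.
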